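(* Let $H$ be a real Hilbert space, $A:H\to c_0$ bounded linear with adjoint $A^*:\ell^1\to H$ (identifying $c_0^*=\ell^1$). Let $(H_n)_{n\in\mathbb N}$ be subspaces of $H$ with $\dim H_n=n$ such that the orthogonal projections $P_n$ onto $H_n$ satisfy $P_nv\to v$ for all $v\in H$, and assume $\mathcal N(A)\cap H_n=\{0\}$ for all $n$. Let $f\in H$ be such that $A^*u=f$ has a solution in $\ell^1$, and assume $$\forall z\in H:\quad \inf_{z^n\in H_n}\|A(z-z^n)\|_\infty\to0\ \text{ as } n\to\infty.$$ Then: (a) If for each $n$, $u^{\dagger,n}$ is a solution of $\min\{\|u\|_1: u\in\ell^1,\ \langle z,A^*u\rangle=\langle z,f\rangle\ \forall z\in H_n\}$, then $(u^{\dagger,n})_n$ has a subsequence converging in the $\ell^1$-norm to a solution of $A^*u=f$. (b) Let $n_{AP}:(0,\infty)\to\mathbb N$ satisfy $n_{AP}(\delta)\to\infty$ and $\delta\kappa_{n_{AP}(\delta)}\to0$ as $\delta\to0$. Let $(\delta_m)_m\subset(0,\infty)$ converge to $0$, let $f^{\delta_m}\in H$ with $\|f^{\delta_m}-f\|\le\delta_m$, and let $u^m$ be a solution of $\min\{\|u\|_1: u\in\ell^1,\ \langle z,A^*u\rangle=\langle z,f^{\delta_m}\rangle\ \forall z\in H_{n_{AP}(\delta_m)}\}$. Then there is a subsequence $(u^{l})_l$ of $(u^m)_m$ and a solution $u^\dagger$ of $A^*u=f$ with $\|u^l-u^\dagger\|_1\to0$.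
   Context: $A^*$ is defined by $\langle A^*u,z\rangle=\sum_iu_i(Az)_i$. $\kappa_n=\sup_{z\in H_n\setminus\{0\}}\|z\|/\|Az\|_\infty$. *)

From HB Require Import structures.
From mathcomp Require Import all_boot all_order all_algebra.
From mathcomp Require Import all_classical all_reals all_analysis.
Set Implicit Arguments. Unset Strict Implicit. Unset Printing Implicit Defensive.
Import Order.TTheory GRing.Theory Num.Theory.
Import numFieldNormedType.Exports.
Local Open Scope classical_set_scope.
Local Open Scope ring_scope.

Section Defs.
Variable R : realType.

Definition is_l1 (u : nat -> R) : Prop := cvgn (series (fun i => `|u i|)).
Definition l1norm (u : nat -> R) : R := limn (series (fun i => `|u i|)).
Definition is_c0 (x : nat -> R) : Prop := x n @[n --> \oo] --> 0.
Definition supnorm (x : nat -> R) : R := sup (range (fun i => `|x i|)).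
Definition pairing (u x : nat -> R) : R := limn (series (fun i => u i * x i)).

Variable H : completeNormedModType R.

Definition hilbert_inner_product (ip : H -> H -> R) : Prop :=
  [/\ forall x y, ip x y = ip y x,
      forall (a : R) x y z, ip (a *: x + y) z = a * ip x z + ip y z
    & forall x, ip x x = `|x| ^+ 2].

Definition bounded_linear_to_c0 (A : H -> nat -> R) : Prop :=
  [/\ forall (a : R) x y, A (a *: x + y) = (fun i => a * A x i + A y i),
      forall z, is_c0 (A z)
    & exists C : R, forall z i, `|A z i| <= C * `|z|].

Definition is_adjoint (ip : H -> H -> R) (A : H -> nat -> R)
  (Astar : (nat -> R) -> H) : Prop :=
  forall u, is_l1 u -> forall z, ip (Astar u) z = pairing u (A z).

Definition subspace_of_dim (S : set H) (n : nat) : Prop :=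
  exists e : 'I_n -> H,
    (forall c : 'I_n -> R, \sum_(i < n) c i *: e i = 0 -> forall i, c i = 0) /\
    S = [set \sum_(i < n) c i *: e i | c in [set: 'I_n -> R]].

Definition is_orth_proj (ip : H -> H -> R) (S : set H) (P : H -> H) : Prop :=
  forall v, S (P v) /\ (forall w, S w -> ip (v - P v) w = 0).

Definition kappa (A : H -> nat -> R) (Hn : nat -> set H) (n : nat) : R :=
  sup [set `|z| / supnorm (A z) | z in Hn n `\ 0].

Definition is_min_l1_solution (ip : H -> H -> R) (Astar : (nat -> R) -> H)
  (S : set H) (g : H) (u : nat -> R) : Prop :=
  [/\ is_l1 u,
      (forall z, S z -> ip z (Astar u) = ip z g)
    & forall v, is_l1 v -> (forall z, S z -> ip z (Astar v) = ip z g) ->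
        l1norm u <= l1norm v].

End Defs.

From HB Require Import structures.
From mathcomp Require Import all_boot all_order all_algebra.
From mathcomp Require Import all_classical all_reals all_analysis.
From mathcomp Require Import ring lra.
Set Implicit Arguments. Unset Strict Implicit. Unset Printing Implicit Defensive.
Import Order.TTheory GRing.Theory Num.Theory.
Import numFieldNormedType.Exports.
Local Open Scope classical_set_scope.
Local Open Scope ring_scope.

(* A minimal-norm solution of the projected problem on H_n can be compared
   with u0 + c, where A^* u0 = f and c in l^1 represents the data error on
   H_n: c is a Hahn-Banach extension from A(H_n) in c_0, built one coordinate
   at a time, with ||c||_1 <= kappa_n delta.  Hence the solutions are bounded
   in l^1 and, by a diagonal argument, a subsequence converges coordinatewise
   to some u.  Testing against A z, with z approximated by z_n in H_n, shows
   A^* u = f.  Finally every solution w bounds limsup ||u^n||_1 by ||w||_1, in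
   particular w = u, and coordinatewise convergence without loss of l^1 norm
   is convergence in l^1.  Part (a) is the unperturbed case c = 0. *)

Section SequenceSpaces.
Variable R : realType.
Implicit Types (u v x y : nat -> R) (a B K : R).

Definition l1sum u N : R := \sum_(0 <= i < N) `|u i|.

Lemma l1sum_ge0 u N : 0 <= l1sum u N.
Proof. exact: sumr_ge0. Qed.

Lemma l1sum_cat u N M : (N <= M)%N ->
  l1sum u M = l1sum u N + \sum_(N <= i < M) `|u i|.
Proof. by move=> NM; rewrite /l1sum (big_cat_nat (leq0n N) NM). Qed.

Lemma l1sum_nondecreasing u : nondecreasing_seq (l1sum u).
Proof. by move=> N M NM; rewrite (l1sum_cat u NM) lerDl sumr_ge0. Qed.

Lemma normr_le_l1sum u i : `|u i| <= l1sum u i.+1.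
Proof. by rewrite /l1sum big_nat_recr //= lerDr l1sum_ge0. Qed.

Lemma is_l1P u : is_l1 u <-> exists B, forall N, l1sum u N <= B.
Proof.
split=> [/cvg_has_ub[B HB]|[B HB]].
  by exists B => N; apply: le_trans (HB _ _); [exact: ler_norm | exists N].
apply: nondecreasing_is_cvgn; first exact: l1sum_nondecreasing.
by exists B => _ [N _ <-]; apply: HB.
Qed.

Lemma l1sum_cvg u : is_l1 u -> l1sum u N @[N --> \oo] --> l1norm u.
Proof. by move=> hu; apply: hu. Qed.

Lemma l1sum_le_l1norm u N : is_l1 u -> l1sum u N <= l1norm u.
Proof. by move=> hu; apply: (nondecreasing_cvgn_le (l1sum_nondecreasing u) hu). Qed.

Lemma l1norm_le u B : (forall N, l1sum u N <= B) -> l1norm u <= B.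
Proof.
move=> HB; have hu : is_l1 u by apply/is_l1P; exists B.
by apply: limr_le => //; near=> N; apply: HB.
Unshelve. all: by end_near. Qed.

Lemma l1norm_ge0 u : is_l1 u -> 0 <= l1norm u.
Proof. by move=> hu; apply: le_trans (l1sum_le_l1norm 0 hu); apply: l1sum_ge0. Qed.

Lemma normr_le_l1norm u i : is_l1 u -> `|u i| <= l1norm u.
Proof. by move=> hu; apply: le_trans (normr_le_l1sum u i) (l1sum_le_l1norm _ hu). Qed.

Lemma l1sumD_le u v N : l1sum (fun i => u i + v i) N <= l1sum u N + l1sum v N.
Proof. by rewrite /l1sum -big_split /=; apply: ler_sum => i _; apply: ler_normD. Qed.

Lemma l1sumB_le u v N : l1sum (fun i => u i - v i) N <= l1sum u N + l1sum v N.
Proof. by rewrite /l1sum -big_split /=; apply: ler_sum => i _; apply: ler_normB. Qed.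

Lemma l1normD_le u v : is_l1 u -> is_l1 v ->
  l1norm (fun i => u i + v i) <= l1norm u + l1norm v.
Proof.
move=> hu hv; apply: l1norm_le => N; apply: le_trans (l1sumD_le u v N) _.
by apply: lerD; apply: l1sum_le_l1norm.
Qed.

Lemma l1normB_le u v : is_l1 u -> is_l1 v ->
  l1norm (fun i => u i - v i) <= l1norm u + l1norm v.
Proof.
move=> hu hv; apply: l1norm_le => N; apply: le_trans (l1sumB_le u v N) _.
by apply: lerD; apply: l1sum_le_l1norm.
Qed.

Lemma is_l1D u v : is_l1 u -> is_l1 v -> is_l1 (fun i => u i + v i).
Proof.
move=> hu hv; apply/is_l1P; exists (l1norm u + l1norm v) => N.
by apply: le_trans (l1sumD_le u v N) _; apply: lerD; apply: l1sum_le_l1norm.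
Qed.

Lemma is_l1B u v : is_l1 u -> is_l1 v -> is_l1 (fun i => u i - v i).
Proof.
move=> hu hv; apply/is_l1P; exists (l1norm u + l1norm v) => N.
by apply: le_trans (l1sumB_le u v N) _; apply: lerD; apply: l1sum_le_l1norm.
Qed.

Lemma l1sum0 N : l1sum (fun=> 0) N = 0.
Proof. by rewrite /l1sum big1 // => i _; rewrite normr0. Qed.

Lemma is_l1_0 : is_l1 (fun=> 0 : R).
Proof. by apply/is_l1P; exists 0 => N; rewrite l1sum0. Qed.

Lemma l1norm0 : l1norm (fun=> 0 : R) = 0.
Proof.
apply/le_anti; rewrite l1norm_ge0 ?andbT; last exact: is_l1_0.
by apply: l1norm_le => N; rewrite l1sum0.
Qed.

Definition bounded_seq x := exists B, forall j, `|x j| <= B.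

Lemma c0_bounded x : is_c0 x -> bounded_seq x.
Proof. by move=> /cvgP/cvg_has_ub[B HB]; exists B => j; apply: HB; exists j. Qed.

Lemma bounded_seqD x y : bounded_seq x -> bounded_seq y -> bounded_seq (fun j => x j + y j).
Proof.
move=> [B hB] [C hC]; exists (B + C) => j.
exact: le_trans (ler_normD _ _) (lerD (hB j) (hC j)).
Qed.

Lemma bounded_seqB x y : bounded_seq x -> bounded_seq y -> bounded_seq (fun j => x j - y j).
Proof.
move=> [B hB] [C hC]; exists (B + C) => j.
exact: le_trans (ler_normB _ _) (lerD (hB j) (hC j)).
Qed.

Lemma bounded_seqZ a x : bounded_seq x -> bounded_seq (fun j => a * x j).
Proof. by move=> [B hB]; exists (`|a| * B) => j; rewrite normrM ler_wpM2l. Qed.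

Lemma finite_support_bounded x N :
  (forall i, (N <= i)%N -> x i = 0) -> bounded_seq x.
Proof.
move=> xN; exists (l1sum x N) => j; have [jN|Nj] := ltnP j N.
  exact: le_trans (normr_le_l1sum x j) (l1sum_nondecreasing _ jN).
by rewrite xN // normr0 l1sum_ge0.
Qed.

Lemma supnorm_ge x j : bounded_seq x -> `|x j| <= supnorm x.
Proof. by move=> [B hB]; apply: ub_le_sup; [exists B => _ [i _ <-] | exists j]. Qed.

Lemma supnorm_le x B : (forall j, `|x j| <= B) -> supnorm x <= B.
Proof. by move=> HB; apply: ge_sup; [exists `|x 0%N|, 0%N | move=> _ [j _ <-]]. Qed.

Lemma supnorm_ge0 x : 0 <= supnorm x.
Proof.
have [bx|nbx] := pselect (bounded_seq x).
  exact: le_trans (normr_ge0 _) (supnorm_ge 0 bx).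
rewrite /supnorm sup_out // => -[_ [B HB]]; apply: nbx; exists B => j.
by apply: HB; exists j.
Qed.

Lemma supnorm0 : supnorm (fun=> 0 : R) = 0.
Proof.
by apply/le_anti; rewrite supnorm_ge0 andbT; apply: supnorm_le => j; rewrite normr0.
Qed.

Lemma supnormD_le x y : bounded_seq x -> bounded_seq y ->
  supnorm (fun j => x j + y j) <= supnorm x + supnorm y.
Proof.
move=> hx hy; apply: supnorm_le => j.
exact: le_trans (ler_normD _ _) (lerD (supnorm_ge j hx) (supnorm_ge j hy)).
Qed.

Lemma supnormZ a x : bounded_seq x -> supnorm (fun j => a * x j) = `|a| * supnorm x.
Proof.
move=> hx; apply/le_anti/andP; split.
  by apply: supnorm_le => j; rewrite normrM ler_wpM2l // supnorm_ge.
have [->|a0] := eqVneq a 0; first by rewrite normr0 mul0r supnorm_ge0.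
have na0 : 0 < `|a| by rewrite normr_gt0.
rewrite mulrC -ler_pdivlMr //; apply: supnorm_le => j.
by rewrite ler_pdivlMr // mulrC -normrM; apply: supnorm_ge; apply: bounded_seqZ.
Qed.

Lemma supnormN x : bounded_seq x -> supnorm (fun j => - x j) = supnorm x.
Proof.
move=> hx; rewrite -[RHS]mul1r -normr1 -normrN -supnormZ //.
by congr supnorm; apply/funext => j; rewrite mulN1r.
Qed.

Lemma supnorm_eq0 x : bounded_seq x -> supnorm x = 0 -> x = (fun=> 0).
Proof.
move=> hx x0; apply/funext => j; apply/eqP.
by rewrite -normr_eq0 eq_le normr_ge0 andbT -x0 supnorm_ge.
Qed.

Lemma is_cvg_pairing u x B : is_l1 u -> (forall i, `|x i| <= B) ->
  cvgn (series (fun i => u i * x i)).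
Proof.
move=> hu hx; apply: normed_cvg.
apply: (@series_le_cvg _ _ (fun i => B * `|u i|)).
- by move=> n /=.
- by move=> n; apply: mulr_ge0 => //; apply: le_trans (hx 0%N).
- by move=> n /=; rewrite normrM mulrC ler_wpM2r.
- have -> : (fun i => B * `|u i|) = B *: (fun i => `|u i|) by [].
  exact: is_cvg_seriesZ.
Qed.

Lemma pairing_tail u x B K N : is_l1 u -> (forall i, `|x i| <= B) ->
  (forall i, (N <= i)%N -> `|x i| <= K) ->
  `|pairing u x - \sum_(0 <= i < N) u i * x i| <= (l1norm u - l1sum u N) * K.
Proof.
move=> hu hx hK; have hc := is_cvg_pairing hu hx.
have K0 : 0 <= K by exact: le_trans (normr_ge0 _) (hK N (leqnn N)).
have tail_le n : (N <= n)%N ->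
    `|series (fun i => u i * x i) n - \sum_(0 <= i < N) u i * x i| <=
      (l1norm u - l1sum u N) * K.
  move=> Nn; rewrite /series /= (big_cat_nat (leq0n N) Nn) /= addrAC subrr add0r.
  apply: le_trans (ler_norm_sum _ _ _) _.
  apply: (@le_trans _ _ (\sum_(N <= i < n) `|u i| * K)).
    by apply: ler_sum_nat => i /andP[Ni _]; rewrite normrM ler_wpM2l // hK.
  rewrite -mulr_suml ler_wpM2r // lerBrDl -l1sum_cat //.
  exact: l1sum_le_l1norm.
have tail_le_near : \forall n \near \oo, `|series (fun i => u i * x i) n -
    \sum_(0 <= i < N) u i * x i| <= (l1norm u - l1sum u N) * K.
  by near=> n; apply: tail_le; near: n; exact: nbhs_infty_ge.
rewrite ler_distl; apply/andP; split.
  by apply: limr_ge => //; apply: filterS tail_le_near => n; rewrite ler_distl => /andP[].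
by apply: limr_le => //; apply: filterS tail_le_near => n; rewrite ler_distl => /andP[].
Unshelve. all: by end_near. Qed.

Lemma pairing_le u x B : is_l1 u -> (forall i, `|x i| <= B) ->
  `|pairing u x| <= l1norm u * B.
Proof.
move=> hu hx; have := @pairing_tail u x B B 0%N hu hx (fun i _ => hx i).
by rewrite big_geq // subr0 /l1sum big_geq // subr0.
Qed.

Lemma pairing0 x : pairing (fun=> 0) x = 0.
Proof.
rewrite /pairing (_ : series _ = fun=> 0) ?lim_cst //.
by apply/funext => N; rewrite /series /= big1 // => i _; rewrite mul0r.
Qed.

Lemma pairingDl u v x B : is_l1 u -> is_l1 v -> (forall i, `|x i| <= B) ->
  pairing (fun i => u i + v i) x = pairing u x + pairing v x.
Proof.
move=> hu hv hx; rewrite /pairing -lim_seriesD; last 2 first.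
- exact: is_cvg_pairing hu hx.
- exact: is_cvg_pairing hv hx.
by congr (limn (series _)); apply/funext => i; rewrite !fctE mulrDl.
Qed.

Lemma pairingBl u v x B : is_l1 u -> is_l1 v -> (forall i, `|x i| <= B) ->
  pairing (fun i => u i - v i) x = pairing u x - pairing v x.
Proof.
move=> hu hv hx; rewrite /pairing -lim_seriesB; last 2 first.
- exact: is_cvg_pairing hu hx.
- exact: is_cvg_pairing hv hx.
by congr (limn (series _)); apply/funext => i; rewrite !fctE mulrBl.
Qed.

Lemma pairingBr u x y Bx By : is_l1 u -> (forall i, `|x i| <= Bx) ->
  (forall i, `|y i| <= By) ->
  pairing u (fun i => x i - y i) = pairing u x - pairing u y.
Proof.
move=> hu hx hy; rewrite /pairing -lim_seriesB; last 2 first.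
- exact: is_cvg_pairing hu hx.
- exact: is_cvg_pairing hu hy.
by congr (limn (series _)); apply/funext => i; rewrite !fctE mulrBr.
Qed.

End SequenceSpaces.

Lemma increasing_ge_id (phi : nat -> nat) :
  {homo phi : k l / (k < l)%N} -> forall k, (k <= phi k)%N.
Proof. by move=> hphi; elim=> // k IH; apply: leq_ltn_trans IH (hphi _ _ _). Qed.

Lemma cvg_later_terms (T : topologicalType) (g h : nat -> T) (L : T) K :
  (forall k, (K <= k)%N -> exists2 m, (k <= m)%N & h k = g m) ->
  g @ \oo --> L -> h @ \oo --> L.
Proof.
move=> hgh gL U /gL[N _ HN]; exists (maxn N K) => // k /=.
rewrite geq_max => /andP[Nk Kk]; have [m km ->] := hgh k Kk.
exact/HN/(leq_trans Nk km).
Qed.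

Lemma increasing_cvg_infty (phi : nat -> nat) :
  {homo phi : k l / (k < l)%N} -> phi @ \oo --> \oo.
Proof.
move=> hphi P [N _ HN]; exists N => // k /= Nk.
exact/HN/(leq_trans Nk (increasing_ge_id hphi k)).
Qed.

Lemma cvg_subseq (T : topologicalType) (g : nat -> T) (L : T) (phi : nat -> nat) :
  {homo phi : k l / (k < l)%N} -> g @ \oo --> L -> (fun k => g (phi k)) @ \oo --> L.
Proof. by move=> /increasing_cvg_infty phi_oo gL; apply: cvg_comp phi_oo gL. Qed.

Section Diagonal.
Variables (R : realType) (s : nat -> nat -> R).
Variable extract : (nat -> R) -> nat -> nat.
Hypothesis extract_incr : forall t, {homo extract t : k l / (k < l)%N}.
Hypothesis extract_cvg : forall t, bounded_fun t -> cvgn (t \o extract t).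

Fixpoint nested_subseq j : nat -> nat :=
  if j is j.+1 then nested_subseq j \o extract (fun k => s (nested_subseq j k) j)
  else id.

Lemma nested_subseq_incr j : {homo nested_subseq j : k l / (k < l)%N}.
Proof. by elim: j => [//|j IH] k l kl /=; apply/IH/extract_incr. Qed.

Lemma nested_subseq_later a b : (a <= b)%N ->
  forall x, exists2 y, (x <= y)%N & nested_subseq b x = nested_subseq a y.
Proof.
elim: b => [|b IH]; first by rewrite leqn0 => /eqP-> x; exists x.
rewrite leq_eqVlt => /orP[/eqP-> x|ab x]; first by exists x.
have [y xy e] := IH ab (extract (fun k => s (nested_subseq b k) b) x).
by exists y; [exact/(leq_trans _ xy)/increasing_ge_id | rewrite /= e].
Qed.

Lemma diagonal_incr : {homo (fun k => nested_subseq k k) : k l / (k < l)%N}.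
Proof.
have step k : (nested_subseq k k < nested_subseq k.+1 k.+1)%N.
  by apply/nested_subseq_incr/(leq_trans _ (increasing_ge_id (extract_incr _) _)).
move=> k l; elim: l => // l IH; rewrite ltnS leq_eqVlt => /orP[/eqP->//|kl].
exact: ltn_trans (IH kl) (step l).
Qed.

Lemma cvg_diagonal i : bounded_fun (fun k => s k i) ->
  cvgn (fun k => s (nested_subseq k k) i).
Proof.
move=> bi; have bt : bounded_fun (fun k => s (nested_subseq i k) i).
  by case: bi => M0 [M0r hM]; exists M0; split=> // M M0M k _; apply: (hM M M0M).
have /cvg_ex[L hL] := extract_cvg bt; apply/cvg_ex; exists L.
apply: (cvg_later_terms (K := i.+1)) hL => k ik.
by have [y ky ->] := nested_subseq_later ik k; exists y.
Qed.

End Diagonal.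

Lemma diagonal_subsequence (R : realType) (s : nat -> nat -> R) :
  (forall i, bounded_fun (fun k => s k i)) ->
  exists2 phi : nat -> nat, {homo phi : k l / (k < l)%N} &
    forall i, cvgn (fun k => s (phi k) i).
Proof.
move=> bs.
have extract_ex (t : nat -> R) : exists phi : nat -> nat,
    {homo phi : k l / (k < l)%N} /\ (bounded_fun t -> cvgn (t \o phi)).
  have [bt|nbt] := pselect (bounded_fun t); last by exists id; split=> // /nbt.
  have [phi /increasing_seqP phi_incr phi_cvg] := bolzano_weierstrass bt.
  by exists phi; split=> //; apply: homo_ltn; [exact: ltn_trans | exact: phi_incr].
have [extract hextract] := choice extract_ex.
exists (fun k => nested_subseq s extract k k).
  by apply: diagonal_incr => t; case: (hextract t).
by move=> i; apply: cvg_diagonal => // t; case: (hextract t).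
Qed.

Lemma cvg_of_dist_le (R : realType) (a s : nat -> R) (l C : R) :
  (forall k, `|a k - l| <= C * s k) -> s @ \oo --> 0 -> a @ \oo --> l.
Proof.
move=> als s0; apply/cvgrPdist_le => e e0.
have Cs0 : C * s k @[k --> \oo] --> 0 by rewrite -(mulr0 C); apply: cvgMl_tmp.
near=> k; rewrite distrC (le_trans (als k)) // (le_trans (ler_norm _)) //.
by near: k; move/cvgrPdist_le : Cs0 => /(_ e e0); apply: filterS => k; rewrite sub0r normrN.
Unshelve. all: by end_near. Qed.

Section L1Convergence.
Variable R : realType.
Implicit Types (u x : nat -> R) (w : nat -> nat -> R) (M : R).

Lemma cvg_sum_nat (F : nat -> nat -> R) (G : nat -> R) N :
  (forall i, F k i @[k --> \oo] --> G i) ->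
  \sum_(0 <= i < N) F k i @[k --> \oo] --> \sum_(0 <= i < N) G i.
Proof.
move=> hF; elim: N => [|N IH].
  by under eq_fun do rewrite big_geq //; rewrite big_geq //; exact: cvg_cst.
under eq_fun do rewrite big_nat_recr //=.
by rewrite big_nat_recr //=; apply: cvgD.
Qed.

Lemma cvg_l1sum w u N : (forall i, w k i @[k --> \oo] --> u i) ->
  l1sum (w k) N @[k --> \oo] --> l1sum u N.
Proof. by move=> hw; apply: cvg_sum_nat => i; apply: cvg_norm; apply: hw. Qed.

Lemma pairing_tail_le u x B K N M : is_l1 u -> l1norm u <= M ->
  (forall i, `|x i| <= B) -> (forall i, (N <= i)%N -> `|x i| <= K) ->
  `|pairing u x - \sum_(0 <= i < N) u i * x i| <= M * K.
Proof.
move=> hu uM hx hK; apply: le_trans (pairing_tail hu hx hK) _.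
have K0 : 0 <= K by exact: le_trans (normr_ge0 _) (hK N (leqnn N)).
by rewrite ler_wpM2r // lerBlDr (le_trans uM) // lerDl l1sum_ge0.
Qed.

Lemma cvg_pairing_c0 w u M x :
  (forall k, is_l1 (w k)) -> (forall k, l1norm (w k) <= M) ->
  is_l1 u -> l1norm u <= M -> (forall i, w k i @[k --> \oo] --> u i) -> is_c0 x ->
  pairing (w k) x @[k --> \oo] --> pairing u x.
Proof.
move=> hw wM hu uM hwu hx; have [B hB] := c0_bounded hx.
have M0 : 0 <= M by exact: le_trans (l1norm_ge0 hu) uM.
apply/cvgrPdist_le => e e0.
pose eta := e / (4 * (M + 1)).
have eta0 : 0 < eta by rewrite divr_gt0 // mulr_gt0 // ltr_wpDl.
have Meta : M * eta <= e / 4.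
  have M1 : M + 1 != 0 by rewrite gt_eqF // ltr_wpDl.
  have -> : M * eta = e / 4 * (M / (M + 1)) by rewrite /eta; field.
  apply: ler_piMr; first by rewrite divr_ge0 ?ltW.
  by rewrite ler_pdivrMr ?ltr_wpDl // mul1r lerDl.
have [N _ HN] := (cvgrPdist_le _ _).1 hx eta eta0.
have xN i : (N <= i)%N -> `|x i| <= eta by move=> Ni; rewrite -normrN -sub0r HN.
have hS : \sum_(0 <= i < N) w k i * x i @[k --> \oo] --> \sum_(0 <= i < N) u i * x i.
  by apply: cvg_sum_nat => i; apply: cvgMr_tmp; apply: hwu.
have e20 : 0 < e / 2 by rewrite divr_gt0.
have hS2 := (cvgrPdist_le _ _).1 hS (e / 2) e20.
near=> k.
have hSk : `|\sum_(0 <= i < N) u i * x i - \sum_(0 <= i < N) w k i * x i| <= e / 2.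
  by near: k; exact: hS2.
have tu := pairing_tail_le hu uM hB xN.
have tw := pairing_tail_le (hw k) (wM k) hB xN.
have := ler_normB (pairing u x - \sum_(0 <= i < N) u i * x i)
  (pairing (w k) x - \sum_(0 <= i < N) w k i * x i).
have := ler_normD (pairing u x - \sum_(0 <= i < N) u i * x i -
  (pairing (w k) x - \sum_(0 <= i < N) w k i * x i))
  (\sum_(0 <= i < N) u i * x i - \sum_(0 <= i < N) w k i * x i).
rewrite (_ : _ - _ + _ = pairing u x - pairing (w k) x); last by ring.
lra.
Unshelve. all: by end_near. Qed.

Lemma l1_bounded_coord_subseq w M :
  (forall k, is_l1 (w k)) -> (forall k, l1norm (w k) <= M) ->
  exists (phi : nat -> nat) u, [/\ {homo phi : k l / (k < l)%N}, is_l1 u,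
    l1norm u <= M & forall i, w (phi k) i @[k --> \oo] --> u i].
Proof.
move=> hw wM.
have [phi phi_incr phi_cvg] : exists2 phi : nat -> nat,
    {homo phi : k l / (k < l)%N} & forall i, cvgn (fun k => w (phi k) i).
  apply: diagonal_subsequence => i; exists M; split; first by rewrite num_real.
  move=> y My k _; apply: le_trans (ltW My).
  exact: le_trans (normr_le_l1norm i (hw k)) (wM k).
pose u i := limn (fun k => w (phi k) i).
have hwu i : w (phi k) i @[k --> \oo] --> u i by apply: phi_cvg.
have uM N : l1sum u N <= M.
  have hN := @cvg_l1sum (fun k => w (phi k)) u N hwu.
  rewrite -(cvg_lim _ hN) //; apply: limr_le; first exact: cvgP hN.
  by near=> k; apply: le_trans (l1sum_le_l1norm N (hw _)) (wM _).
exists phi, u; split=> //; first by apply/is_l1P; exists M.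
exact: l1norm_le.
Unshelve. all: by end_near. Qed.

Lemma l1_cvg_of_coord_cvg w u :
  (forall k, is_l1 (w k)) -> is_l1 u -> (forall i, w k i @[k --> \oo] --> u i) ->
  (forall e, 0 < e -> \forall k \near \oo, l1norm (w k) <= l1norm u + e) ->
  l1norm (fun i => w k i - u i) @[k --> \oo] --> 0.
Proof.
move=> hw hu hwu wu; apply/cvgrPdist_le => e e0.
pose e' := e / 5; have e'0 : 0 < e' by rewrite divr_gt0.
have [N _ HN] := (cvgrPdist_le _ _).1 (l1sum_cvg hu) e' e'0.
have u_tail : l1norm u - l1sum u N <= e'.
  exact: le_trans (ler_norm _) (HN N (leqnn N)).
have hd : l1sum (fun i => w k i - u i) N @[k --> \oo] --> 0.
  rewrite -(l1sum0 R N); apply: cvg_l1sum => i /=.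
  by rewrite -(subrr (u i)); apply: cvgB => //; exact: cvg_cst.
have dN_near := (cvgrPdist_le _ _).1 hd e' e'0.
have wN_near := (cvgrPdist_le _ _).1 (@cvg_l1sum w u N hwu) e' e'0.
near=> k.
have dN : `|0 - l1sum (fun i => w k i - u i) N| <= e' by near: k; exact: dN_near.
have wN : `|l1sum u N - l1sum (w k) N| <= e' by near: k; exact: wN_near.
have wk : l1norm (w k) <= l1norm u + e' by near: k; exact: (wu e' e'0).
rewrite sub0r normrN ger0_norm; last exact/l1norm_ge0/is_l1B.
apply: l1norm_le => N'; apply: le_trans (l1sum_nondecreasing _ (leq_maxr N N')) _.
set N'' := maxn N N'; have NN'' : (N <= N'')%N by exact: leq_maxl.
rewrite (l1sum_cat _ NN'').
have tail_le : \sum_(N <= i < N'') `|w k i - u i| <=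
    \sum_(N <= i < N'') `|w k i| + \sum_(N <= i < N'') `|u i|.
  by rewrite -big_split /=; apply: ler_sum => i _; apply: ler_normB.
(* beyond [N], [w k] carries at most [3 e'] since it loses no norm in the limit *)
have := l1sum_cat (w k) NN''; have := l1sum_cat u NN''.
have := l1sum_le_l1norm N'' (hw k); have := l1sum_le_l1norm N'' hu.
have -> : e = 5 * e' by rewrite /e' mulrC divfK // pnatr_eq0.
move: dN wN; rewrite sub0r normrN ler_distl ger0_norm ?l1sum_ge0 // => dN /andP[wN1 wN2].
lra.
Unshelve. all: by end_near. Qed.

End L1Convergence.

Section HilbertSpace.
Variables (R : realType) (H : completeNormedModType R) (ip : H -> H -> R).
Hypothesis hip : hilbert_inner_product ip.

Lemma ipC x y : ip x y = ip y x.
Proof. by case: hip. Qed.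

Lemma ip_linear a x y z : ip (a *: x + y) z = a * ip x z + ip y z.
Proof. by case: hip. Qed.

Lemma ip_normE x : ip x x = `|x| ^+ 2.
Proof. by case: hip. Qed.

Lemma ip0l z : ip 0 z = 0.
Proof. by have := ip_linear 1 0 0 z; rewrite scaler0 addr0 mul1r; lra. Qed.

Lemma ipZl a x z : ip (a *: x) z = a * ip x z.
Proof. by rewrite -[a *: x]addr0 ip_linear ip0l addr0. Qed.

Lemma ipDl x y z : ip (x + y) z = ip x z + ip y z.
Proof. by have := ip_linear 1 x y z; rewrite scale1r mul1r. Qed.

Lemma ipBl x y z : ip (x - y) z = ip x z - ip y z.
Proof. by rewrite ipDl -scaleN1r ipZl mulN1r. Qed.

Lemma ip_inj x y : (forall z, ip x z = ip y z) -> x = y.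
Proof.
move=> xy; apply/eqP; rewrite -subr_eq0 -normr_eq0 -sqrf_eq0 -ip_normE.
by rewrite ipBl xy subrr.
Qed.

Lemma ip_cauchy_schwarz x y : `|ip x y| <= `|x| * `|y|.
Proof.
have [->|y0] := eqVneq y 0; first by rewrite ipC ip0l normr0 normr0 mulr0.
set a := ip x y; set X := `|x|; set Y := `|y|.
have Y0 : 0 < Y by rewrite normr_gt0.
(* [v] is orthogonal to [y], so [0 <= ip v v] is the inequality *)
pose v := Y ^+ 2 *: x + (- a) *: y.
have vv : ip v v = Y ^+ 2 * (Y ^+ 2 * X ^+ 2 - a * a).
  rewrite {1}/v ipDl !ipZl [ip x v]ipC [ip y v]ipC /v !ipDl !ipZl !ip_normE.
  by rewrite [ip y x]ipC -/a -/X -/Y; ring.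
have : 0 <= ip v v by rewrite ip_normE exprn_ge0.
rewrite vv pmulr_rge0 ?exprn_gt0 // subr_ge0 => aXY.
have XY0 : 0 <= X * Y by rewrite mulr_ge0 ?normr_ge0 // ltW.
rewrite -ler_sqr ?nnegrE // real_normK ?num_real //.
by rewrite expr2 exprMn [X ^+ 2 * _]mulrC.
Qed.

End HilbertSpace.

Section BoundedOperator.
Variables (R : realType) (H : completeNormedModType R) (A : H -> nat -> R).
Hypothesis hA : bounded_linear_to_c0 A.

Lemma A_linear a x y : A (a *: x + y) = (fun i => a * A x i + A y i).
Proof. by case: hA. Qed.

Lemma A_c0 z : is_c0 (A z).
Proof. by case: hA. Qed.

Lemma A_bounded z : bounded_seq (A z).
Proof. exact/c0_bounded/A_c0. Qed.

Lemma A_supnorm_ge z i : `|A z i| <= supnorm (A z).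
Proof. exact/supnorm_ge/A_bounded. Qed.

Lemma AB z w : A (z - w) = (fun i => A z i - A w i).
Proof.
by rewrite addrC -scaleN1r A_linear; apply/funext => i; rewrite mulN1r addrC.
Qed.

Lemma A0 : A 0 = (fun=> 0).
Proof. by rewrite -(subrr 0) AB; apply/funext => i; rewrite subrr. Qed.

Lemma AZ a z : A (a *: z) = (fun j => a * A z j).
Proof.
by rewrite -[a *: z]addr0 A_linear A0; apply/funext => j; rewrite addr0.
Qed.

Lemma A_sum n (c : 'I_n -> R) (e : 'I_n -> H) :
  A (\sum_(i < n) c i *: e i) = (fun j => \sum_(i < n) c i * A (e i) j).
Proof.
rewrite -fct_sumE.
apply: (big_rec2 (fun x y => A x = y)); first by rewrite A0.
by move=> i y1 y2 _ h; rewrite A_linear h; apply/funext => j; rewrite fctE.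
Qed.

Lemma pairing_AB u z w : is_l1 u ->
  pairing u (A (z - w)) = pairing u (A z) - pairing u (A w).
Proof. by move=> hu; rewrite AB (pairingBr hu (A_supnorm_ge z) (A_supnorm_ge w)). Qed.

End BoundedOperator.

Section FiniteDimSubspace.
Variables (R : realType) (H : completeNormedModType R) (V : set H) (n : nat).
Hypothesis hV : subspace_of_dim V n.

Lemma subspace_linear a x y : V x -> V y -> V (a *: x + y).
Proof.
case: hV => e [_ ->] [c1 _ <-] [c2 _ <-]; exists (fun i => a * c1 i + c2 i) => //.
rewrite scaler_sumr -big_split /=; apply: eq_bigr => i _.
by rewrite scalerDl scalerA.
Qed.

Lemma subspace0 : V 0.
Proof.
case: hV => e [_ ->]; exists (fun=> 0) => //.
by apply: big1 => i _; rewrite scale0r.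
Qed.

End FiniteDimSubspace.

Section Adjoint.
Variables (R : realType) (H : completeNormedModType R).
Variables (ip : H -> H -> R) (A : H -> nat -> R) (Astar : (nat -> R) -> H) (f : H).
Hypothesis hip : hilbert_inner_product ip.
Hypothesis hA : bounded_linear_to_c0 A.
Hypothesis hadj : is_adjoint ip A Astar.

Lemma l1_subseq_cvg_to_solution (v : nat -> nat -> R) M :
  (forall k, is_l1 (v k)) -> (forall k, l1norm (v k) <= M) ->
  (forall z, pairing (v k) (A z) @[k --> \oo] --> ip f z) ->
  (forall w, is_l1 w -> Astar w = f -> forall e, 0 < e ->
     \forall k \near \oo, l1norm (v k) <= l1norm w + e) ->
  exists (phi : nat -> nat) (udag : nat -> R),
    {homo phi : k l / (k < l)%N >-> (k < l)%N} /\
    is_l1 udag /\ Astar udag = f /\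
    l1norm (fun i => v (phi k) i - udag i) @[k --> \oo] --> 0.
Proof.
move=> hv vM vf vmin.
have [phi [u [phi_incr hu uM vu]]] := l1_bounded_coord_subseq hv vM.
have Au : Astar u = f.
  apply: (ip_inj hip) => z; rewrite hadj //.
  have h1 := cvg_pairing_c0 (w := fun k => v (phi k)) (fun k => hv _) (fun k => vM _)
    hu uM vu (A_c0 hA z).
  have h2 := cvg_subseq phi_incr (vf z).
  exact: cvg_unique _ h1 h2.
exists phi, u; do 3!split=> //.
apply: l1_cvg_of_coord_cvg => // e e0.
exact: increasing_cvg_infty phi_incr _ (vmin u hu Au e e0).
Qed.

End Adjoint.

(* A subspace of bounded sequences is given as the image of [L] on the
   parameters [S], which are closed under linear combinations; [psi] is a
   functional on the parameters dominated by [C * supnorm (L _)]. *)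
Section HahnBanachStep.
Variables (R : realType) (T : Type) (S : set T) (psi : T -> R) (L : T -> nat -> R).
Variables (C : R) (e : nat -> R) (p0 : T).
Hypothesis S_p0 : S p0.
Hypothesis C_ge0 : 0 <= C.
Hypothesis S_linear : forall p q a, S p -> S q -> exists r, [/\ S r,
  psi r = a * psi p + psi q & L r = (fun j => a * L p j + L q j)].
Hypothesis L_bounded : forall p, S p -> bounded_seq (L p).
Hypothesis e_bounded : bounded_seq e.
Hypothesis psi_dominated : forall p, S p -> `|psi p| <= C * supnorm (L p).

Lemma hb_scale p a : S p ->
  exists r, [/\ S r, psi r = a * psi p & L r = (fun j => a * L p j)].
Proof.
have [r0 [Sr0 psir0 Lr0]] := S_linear (-1) S_p0 S_p0.
move=> Sp; have [r [Sr pr Lr]] := S_linear a Sp Sr0.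
exists r; split=> //; first by rewrite pr psir0 mulN1r addNr addr0.
by rewrite Lr Lr0; apply/funext => j; rewrite mulN1r addNr addr0.
Qed.

Let supB p := supnorm (fun j => L p j - e j).
Let supD p := supnorm (fun j => L p j + e j).

Lemma hb_separation p q : S p -> S q -> psi p - C * supB p <= C * supD q - psi q.
Proof.
move=> Sp Sq; have [r [Sr pr Lr]] := S_linear 1 Sp Sq.
have := psi_dominated Sr; rewrite pr Lr mul1r.
have -> : (fun j => 1 * L p j + L q j) = (fun j => (L p j - e j) + (L q j + e j)).
  by apply/funext => j; rewrite mul1r addrACA addNr addr0.
have := supnormD_le (bounded_seqB (L_bounded Sp) e_bounded)
  (bounded_seqD (L_bounded Sq) e_bounded).
rewrite -/(supB p) -/(supD q) => hD hpsi.
have := ler_wpM2l C_ge0 hD; have := ler_norm (psi p + psi q).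
rewrite mulrDr; lra.
Qed.

(* The value at [e] must lie between these lower bounds and the upper bounds
   [C * supD q - psi q] of [hb_separation]; their supremum does. *)
Let E := [set psi p - C * supB p | p in S].

Lemma hb_value_ge p : S p -> psi p - C * supB p <= sup E.
Proof.
move=> Sp; apply: sup_upper_bound; last by exists p.
split; first by exists (psi p0 - C * supB p0), p0.
by exists (C * supD p0 - psi p0) => _ [q Sq <-]; apply: hb_separation.
Qed.

Lemma hb_value_le q : S q -> sup E <= C * supD q - psi q.
Proof.
move=> Sq; apply: ge_sup; first by exists (psi p0 - C * supB p0), p0.
by move=> _ [p Sp <-]; apply: hb_separation.
Qed.

Lemma hb_upper_bound p t : S p ->
  psi p + t * sup E <= C * supnorm (fun j => L p j + t * e j).
Proof.
move=> Sp; have bLp := L_bounded Sp.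
have [t0|t0|->] := ltgtP t 0; last first.
- rewrite mul0r addr0; apply: le_trans (ler_norm _) _.
  by under eq_fun do rewrite mul0r addr0; apply: psi_dominated.
- have [q [Sq pq Lq]] := hb_scale t^-1 Sp.
  have := hb_value_le Sq; rewrite /supD pq Lq.
  have -> : (fun j => L p j + t * e j) = (fun j => t * (t^-1 * L p j + e j)).
    by apply/funext => j; rewrite mulrDr mulrA mulfV ?gt_eqF // mul1r.
  rewrite supnormZ ?gtr0_norm //; last exact/bounded_seqD/e_bounded/bounded_seqZ.
  move/(ler_wpM2l (ltW t0)).
  rewrite mulrBr [t * (t^-1 * _)]mulrA mulfV ?gt_eqF // mul1r [t * (C * _)]mulrCA.
  lra.
- have s0 : 0 < - t by rewrite oppr_gt0.
  have [q [Sq pq Lq]] := hb_scale (- t)^-1 Sp.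
  have := hb_value_ge Sq; rewrite /supB pq Lq.
  have -> : (fun j => L p j + t * e j) = (fun j => (- t) * ((- t)^-1 * L p j - e j)).
    by apply/funext => j; rewrite mulrBr mulrA mulfV ?gt_eqF // mul1r mulNr opprK.
  rewrite supnormZ ?gtr0_norm //; last exact/bounded_seqB/e_bounded/bounded_seqZ.
  move/(ler_wpM2l (ltW s0)).
  rewrite mulrBr mulrA mulfV ?gt_eqF // mul1r mulrCA.
  lra.
Qed.

Lemma hahn_banach_step : exists c, forall p t, S p ->
  `|psi p + t * c| <= C * supnorm (fun j => L p j + t * e j).
Proof.
exists (sup E) => p t Sp; rewrite ler_norml hb_upper_bound // andbT.
have [q [Sq pq Lq]] := hb_scale (-1) Sp.
have := hb_upper_bound (- t) Sq; rewrite pq Lq.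
have -> : (fun j => -1 * L p j + - t * e j) = (fun j => - (L p j + t * e j)).
  by apply/funext => j; rewrite mulN1r mulNr opprD.
rewrite supnormN; last exact: bounded_seqD (L_bounded Sp) (bounded_seqZ _ e_bounded).
rewrite mulN1r mulNr; lra.
Qed.

End HahnBanachStep.

Section L1Representer.
Variables (R : realType) (H : completeNormedModType R).
Variables (ip : H -> H -> R) (A : H -> nat -> R).
Hypothesis hip : hilbert_inner_product ip.
Hypothesis hA : bounded_linear_to_c0 A.
Variables (V : set H) (n : nat) (g : H) (C : R).
Hypothesis hV : subspace_of_dim V n.
Hypothesis C_ge0 : 0 <= C.
Hypothesis g_dominated : forall z, V z -> `|ip z g| <= C * supnorm (A z).

(* The functional [A z + t |-> ip z g + \sum_(i < N) t i * c i], defined on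
   [A V] plus the sequences supported below [N], is dominated by
   [C * supnorm]. *)
Definition dominated_upto N (c : nat -> R) := forall z (t : nat -> R), V z ->
  (forall i, (N <= i)%N -> t i = 0) ->
  `|ip z g + \sum_(0 <= i < N) t i * c i| <= C * supnorm (fun j => A z j + t j).

Lemma dominated_upto_eq N c c' : (forall i, (i < N)%N -> c i = c' i) ->
  dominated_upto N c -> dominated_upto N c'.
Proof.
move=> cc' dc z t Vz tN; have := dc z t Vz tN.
by rewrite (@eq_big_nat _ _ _ 0 N _ (fun i => t i * c' i)) // => i /andP[_ iN]; rewrite cc'.
Qed.

Lemma dominated_upto0 c : dominated_upto 0 c.
Proof.
move=> z t Vz t0; rewrite big_geq // addr0.
by under eq_fun do rewrite t0 // addr0; apply: g_dominated.
Qed.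

Lemma dominated_upto_step N c : dominated_upto N c ->
  exists x, dominated_upto N.+1 (fun i => if i == N then x else c i).
Proof.
move=> dc.
pose S (p : H * (nat -> R)) := V p.1 /\ forall i, (N <= i)%N -> p.2 i = 0.
pose psi (p : H * (nat -> R)) := ip p.1 g + \sum_(0 <= i < N) p.2 i * c i.
pose L (p : H * (nat -> R)) j := A p.1 j + p.2 j.
pose e j : R := (j == N)%:R.
have S0 : S (0, fun=> 0) by split=> //; exact: subspace0 hV.
have S_linear p q a : S p -> S q -> exists r, [/\ S r, psi r = a * psi p + psi q &
    L r = (fun j => a * L p j + L q j)].
  case: p q => [z1 t1] [z2 t2] [/= V1 h1] [/= V2 h2].
  exists (a *: z1 + z2, fun i => a * t1 i + t2 i); split.
  - split=> /=; first exact: (subspace_linear hV).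
    by move=> i Ni; rewrite h1 // h2 // mulr0 addr0.
  - rewrite /psi /= (ip_linear hip) mulrDr addrACA mulr_sumr -big_split /=.
    by congr (_ + _); apply: eq_bigr => i _; rewrite mulrDl mulrA.
  - by rewrite /L /= (A_linear hA); apply/funext => j /=; rewrite mulrDr addrACA.
have L_bounded p : S p -> bounded_seq (L p).
  case: p => z t [/= Vz tN].
  exact: bounded_seqD (A_bounded hA z) (finite_support_bounded tN).
have e_bounded : bounded_seq e by exists 1 => j; rewrite /e; case: (j == N); rewrite ?normr1 ?normr0.
have psi_dominated p : S p -> `|psi p| <= C * supnorm (L p).
  by case: p => z t [/= Vz tN]; exact: dc.
have [x hx] := hahn_banach_step S0 C_ge0 S_linear L_bounded e_bounded psi_dominated.
exists x => z t Vz tN1.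
pose t' i := if i == N then 0 else t i.
have St' : S (z, t').
  split=> //= i Ni; rewrite /t'; case: eqP => // /eqP iN.
  by apply: tN1; rewrite ltn_neqAle eq_sym iN.
have := hx (z, t') (t N) St'; rewrite /psi /L /= big_nat_recr //= eqxx addrA.
have -> : \sum_(0 <= i < N) t' i * c i =
    \sum_(0 <= i < N) t i * (if i == N then x else c i).
  by apply: eq_big_nat => i /andP[_ iN]; rewrite /t' ifN_eq ?ltn_eqF.
congr (_ <= C * supnorm _); apply/funext => j; rewrite /t' /e.
by case: (eqVneq j N) => [->|_]; rewrite ?mulr1 ?addr0 // mulr0 addr0.
Qed.

Section Extension.
Variable next : nat -> (nat -> R) -> R.
Hypothesis next_spec : forall N c, dominated_upto N c ->
  dominated_upto N.+1 (fun i => if i == N then next N c else c i).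

Fixpoint coef_upto N : nat -> R :=
  if N is N'.+1 then fun i => if i == N' then next N' (coef_upto N') else coef_upto N' i
  else fun=> 0.

Lemma coef_upto_dominated N : dominated_upto N (coef_upto N).
Proof. by elim: N => [|N IH]; [exact: dominated_upto0 | exact: next_spec]. Qed.

Lemma coef_upto_stable N i : (i < N)%N -> coef_upto N i = coef_upto i.+1 i.
Proof.
elim: N => // N IH; rewrite ltnS leq_eqVlt => /orP[/eqP->//|iN].
by rewrite /= ltn_eqF // IH.
Qed.

End Extension.

Lemma exists_dominated_seq : exists c, forall N, dominated_upto N c.
Proof.
have next_ex (Nc : nat * (nat -> R)) : exists x, dominated_upto Nc.1 Nc.2 ->
    dominated_upto Nc.1.+1 (fun i => if i == Nc.1 then x else Nc.2 i).
  have [/dominated_upto_step[x hx]|nd] := pselect (dominated_upto Nc.1 Nc.2).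
    by exists x.
  by exists 0.
have [next next_spec] := choice next_ex.
pose next' N c := next (N, c).
have next'_spec N c : dominated_upto N c ->
    dominated_upto N.+1 (fun i => if i == N then next' N c else c i).
  exact: next_spec (N, c).
exists (fun i => coef_upto next' i.+1 i) => N.
apply: dominated_upto_eq (@coef_upto_dominated next' next'_spec N).
exact: coef_upto_stable.
Qed.

Lemma dominated_l1sum_le c : (forall N, dominated_upto N c) -> forall N, l1sum c N <= C.
Proof.
move=> dc N; pose t i := if (i < N)%N then Num.sg (c i) else 0.
have tN i : (N <= i)%N -> t i = 0 by move=> Ni; rewrite /t ltnNge Ni.
have := dc N 0 t (subspace0 hV) tN; rewrite (ip0l hip) add0r (A0 hA).
have -> : \sum_(0 <= i < N) t i * c i = l1sum c N.
  by apply: eq_big_nat => i /andP[_ iN]; rewrite /t iN -normrEsg.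
rewrite ger0_norm ?l1sum_ge0 // => /le_trans; apply.
rewrite -[leRHS]mulr1 ler_wpM2l //; apply: supnorm_le => j.
by rewrite add0r /t; case: ifP; rewrite ?normr0 // normr_sg; case: (_ != _).
Qed.

Lemma dominated_pairing c z : (forall N, dominated_upto N c) -> is_l1 c -> V z ->
  pairing c (A z) = ip z g.
Proof.
move=> dc hc Vz; pose x := A z.
pose tail N := supnorm (fun j => if (j < N)%N then 0 else x j).
have partial_le N : `|series (fun i => c i * x i) N - ip z g| <= C * tail N.
  pose t i := if (i < N)%N then - x i else 0.
  have tN i : (N <= i)%N -> t i = 0 by move=> Ni; rewrite /t ltnNge Ni.
  have := dc N z t Vz tN.
  have -> : (fun j => A z j + t j) = (fun j => if (j < N)%N then 0 else x j).
    by apply/funext => j; rewrite /t /x; case: ifP; rewrite ?subrr ?addr0.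
  have -> : \sum_(0 <= i < N) t i * c i = - series (fun i => c i * x i) N.
    rewrite /series /= -sumrN; apply: eq_big_nat => i /andP[_ iN].
    by rewrite /t iN mulNr mulrC.
  by rewrite distrC addrC.
have tail0 : tail @ \oo --> 0.
  apply/cvgrPdist_le => eps eps0.
  have [N0 _ HN0] := (cvgrPdist_le _ _).1 (A_c0 hA z) eps eps0.
  exists N0 => // N /= N0N; rewrite sub0r normrN ger0_norm ?supnorm_ge0 //.
  apply: supnorm_le => j; case: ifPn => [_|]; first by rewrite normr0 ltW.
  by rewrite -leqNgt => Nj; rewrite -normrN -sub0r HN0 //= (leq_trans N0N Nj).
have h1 := cvgP _ (is_cvg_pairing hc (A_supnorm_ge hA z)).
exact: cvg_unique _ h1 (cvg_of_dist_le partial_le tail0).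
Qed.

Lemma exists_l1_representer : exists c, [/\ is_l1 c, l1norm c <= C &
  forall z, V z -> pairing c (A z) = ip z g].
Proof.
have [c dc] := exists_dominated_seq.
have hc : is_l1 c by apply/is_l1P; exists C; exact: dominated_l1sum_le.
exists c; split=> //; first exact/l1norm_le/dominated_l1sum_le.
by move=> z; apply: dominated_pairing.
Qed.

End L1Representer.

Lemma continuous_of_lipschitz (R : realType) (V : normedModType R) (F : V -> R) K :
  (forall v w, F v <= F w + K * `|v - w|) -> continuous F.
Proof.
move=> FK v; apply/cvgrPdist_le => e e0.
have K10 : 0 < `|K| + 1 by rewrite ltr_pwDr.
have [d d0 vd] : exists2 d, 0 < d & forall w, `|v - w| < d -> `|F v - F w| <= e.
  exists (e / (`|K| + 1)); first by rewrite divr_gt0.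
  move=> w vw; have Kvw : K * `|v - w| <= e.
    apply: le_trans (ler_norm _) _; rewrite normrM normr_id.
    apply: le_trans (ler_wpM2l (normr_ge0 K) (ltW vw)) _.
    by rewrite mulrA ler_pdivrMr // mulrC ler_pM2l // lerDl.
  have := FK v w; have := FK w v; rewrite distrC.
  by rewrite ler_distl; lra.
have vw_near : \forall w \near v, `|v - w| < d.
  by move: d0; apply: (@cvgrPdist_lt _ _ _ (nbhs v) _ id v).1; exact: cvg_id.
by near=> w; apply: vd; near: w; exact: vw_near.
Unshelve. all: by end_near. Qed.

Lemma homogeneous_lower_bound (R : realType) n (F : 'rV[R]_n -> R) :
  continuous F -> (forall a v, F (a *: v) = `|a| * F v) ->
  (forall v, v != 0 -> 0 < F v) ->
  exists2 m, 0 < m & forall v, m * `|v| <= F v.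
Proof.
move=> Fc FZ Fpos.
have F0 : F 0 = 0 by rewrite -[X in F X](scale0r 0) FZ normr0 mul0r.
have Fnorm v : v != 0 -> F v = `|v| * F (`|v|^-1 *: v).
  move=> v0; rewrite FZ normfV normr_id mulrA mulfV ?mul1r //.
  by rewrite normr_eq0.
have [[w0 w00]|novec] := pselect (exists v : 'rV[R]_n, v != 0); last first.
  exists 1 => // v; have [->|v0] := eqVneq v 0.
    by rewrite normr0 mulr0 F0.
  by exfalso; apply: novec; exists v.
pose S := [set v : 'rV[R]_n | `|v| = 1].
have unit_sphere v : v != 0 -> S (`|v|^-1 *: v).
  by move=> vn0; rewrite /S /= normrZ normfV normr_id mulVf // normr_eq0.
have S_compact : compact S.
  apply: bounded_closed_compact.
    by exists 1; split; rewrite ?num_real // => M M1 v /= ->; exact: ltW.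
  have -> : S = (fun v : 'rV[R]_n => `|v|) @^-1` [set 1] by [].
  by apply: preimage_closed => [x _|]; [exact: norm_continuous | exact: closed_eq].
have [c /set_mem Sc cmin] := EVT_min_rV (ex_intro _ _ (unit_sphere w0 w00)) S_compact
  (continuous_subspaceT Fc).
have c0 : c != 0.
  by apply/eqP => c0; move: Sc; rewrite /S /= c0 normr0 => /eqP; rewrite eq_sym oner_eq0.
exists (F c); first exact: Fpos.
move=> v; have [->|v0] := eqVneq v 0; first by rewrite normr0 mulr0 F0.
rewrite (Fnorm v v0) [F c * _]mulrC; apply: ler_wpM2l => //.
exact/cmin/mem_set/unit_sphere.
Qed.

Lemma normr_rV_entry_le (R : realType) n (v : 'rV[R]_n) i : `|v ord0 i| <= `|v|.
Proof.
rewrite [leRHS]/Num.norm /= mx_normrE; apply/bigmax_geP; right => /=.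
by exists (ord0, i).
Qed.

Section Kappa.
Variables (R : realType) (H : completeNormedModType R) (A : H -> nat -> R).
Hypothesis hA : bounded_linear_to_c0 A.

Lemma supnorm_A_coords_lipschitz n (e : 'I_n -> H) (v w : 'rV[R]_n) :
  supnorm (A (\sum_(i < n) v ord0 i *: e i)) <= supnorm (A (\sum_(i < n) w ord0 i *: e i))
    + (\sum_(i < n) supnorm (A (e i))) * `|v - w|.
Proof.
apply: supnorm_le => j; rewrite (A_sum hA).
pose y := \sum_(i < n) w ord0 i * A (e i) j.
have yF : `|y| <= supnorm (A (\sum_(i < n) w ord0 i *: e i)).
  have := A_supnorm_ge hA (\sum_(i < n) w ord0 i *: e i) j.
  by rewrite {1}(A_sum hA).
rewrite -(subrK y (\sum_(i < n) _)) (le_trans (ler_normD _ _)) // addrC lerD //.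
rewrite /y -sumrB; apply: le_trans (ler_norm_sum _ _ _) _.
rewrite mulr_suml; apply: ler_sum => i _; rewrite -mulrBl normrM mulrC.
apply: ler_pM; rewrite ?normr_ge0 ?A_supnorm_ge //.
by have := normr_rV_entry_le (v - w) i; rewrite !mxE.
Qed.

Lemma subspace_norm_le_supnorm (V : set H) n : subspace_of_dim V n ->
  (forall z, V z -> A z = (fun _ => 0) -> z = 0) ->
  exists K, forall z, V z -> `|z| <= K * supnorm (A z).
Proof.
move=> [e [indep defV]] Ainj.
(* [F v] is [supnorm (A z)] for [z] with coordinates [v]; it is a norm on the
   coordinates, hence bounded below on the unit sphere. *)
pose F (v : 'rV[R]_n) := supnorm (A (\sum_(i < n) v ord0 i *: e i)).
pose Kb := \sum_(i < n) supnorm (A (e i)).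
have F_lip v w : F v <= F w + Kb * `|v - w| by apply: supnorm_A_coords_lipschitz.
have FZ a v : F (a *: v) = `|a| * F v.
  rewrite /F -supnormZ; last exact: A_bounded.
  congr supnorm; rewrite -(AZ hA) scaler_sumr; congr A.
  by apply: eq_bigr => i _; rewrite mxE scalerA.
have Fpos v : v != 0 -> 0 < F v.
  move=> v0; rewrite lt_neqAle supnorm_ge0 andbT eq_sym; apply: contra v0 => /eqP F0.
  have Av0 := supnorm_eq0 (A_bounded hA _) F0.
  have Vv : V (\sum_(i < n) v ord0 i *: e i) by rewrite defV; exists (fun i => v ord0 i).
  have /indep coef0 := Ainj _ Vv Av0.
  by apply/eqP/matrixP => i j; rewrite ord1 mxE coef0.
have [m m0 Fm] := homogeneous_lower_bound (continuous_of_lipschitz F_lip) FZ Fpos.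
pose Ke := \sum_(i < n) `|e i|.
exists (Ke / m) => z; rewrite defV => -[c _ <-].
pose v := \row_(i < n) c i.
have Fv : F v = supnorm (A (\sum_(i < n) c i *: e i)).
  by congr (supnorm (A _)); apply: eq_bigr => i _; rewrite mxE.
have zv : `|\sum_(i < n) c i *: e i| <= `|v| * Ke.
  apply: le_trans (ler_norm_sum _ _ _) _; rewrite /Ke mulr_sumr.
  apply: ler_sum => i _; rewrite normrZ ler_wpM2r //.
  by have := normr_rV_entry_le v i; rewrite mxE.
apply: le_trans zv _; rewrite -Fv mulrAC ler_pdivlMr // mulrC.
rewrite mulrA [Ke * _]mulrC ler_wpM2r //; first exact: sumr_ge0.
Qed.

Lemma kappa_ge0 (Hn : nat -> set H) n : 0 <= kappa A Hn n.
Proof.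
rewrite /kappa; set E := [set _ | _ in _].
have [supE|nsupE] := pselect (has_sup E); last by rewrite sup_out.
have [[y Ey] _] := supE; apply: le_trans (sup_upper_bound supE Ey).
by case: Ey => z _ <-; exact: divr_ge0 (supnorm_ge0 _).
Qed.

Lemma kappa_bound (Hn : nat -> set H) n : subspace_of_dim (Hn n) n ->
  (forall z, Hn n z -> A z = (fun _ => 0) -> z = 0) ->
  forall z, Hn n z -> `|z| <= kappa A Hn n * supnorm (A z).
Proof.
move=> hdim Ainj z Vz; have [->|z0] := eqVneq z 0.
  by rewrite normr0 A0 // supnorm0 mulr0.
have [K zK] := subspace_norm_le_supnorm hdim Ainj.
have Az_pos w : Hn n w -> w != 0 -> 0 < supnorm (A w).
  move=> Vw w0; rewrite lt_neqAle supnorm_ge0 andbT eq_sym; apply: contra w0 => /eqP Aw0.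
  by rewrite -normr_eq0 eq_le normr_ge0 andbT (le_trans (zK w Vw)) // Aw0 mulr0.
rewrite -ler_pdivrMr ?Az_pos //; apply: ub_le_sup; last by exists z => //; split=> //; apply/eqP.
exists K => _ [w [Vw /eqP w0] <-].
by rewrite ler_pdivrMr ?Az_pos // zK.
Qed.

End Kappa.

Lemma data_error_representer (R : realType) (H : completeNormedModType R)
    (ip : H -> H -> R) (A : H -> nat -> R) (Hn : nat -> set H) n (g : H) :
  hilbert_inner_product ip -> bounded_linear_to_c0 A -> subspace_of_dim (Hn n) n ->
  (forall z, Hn n z -> A z = (fun _ => 0) -> z = 0) ->
  exists c, [/\ is_l1 c, l1norm c <= kappa A Hn n * `|g| &
    forall z, Hn n z -> pairing c (A z) = ip z g].
Proof.
move=> hip hA hdim Ainj; apply: (exists_l1_representer hip hA hdim).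
  by apply: mulr_ge0; [exact: kappa_ge0 | exact: normr_ge0].
move=> z Vz; apply: le_trans (ip_cauchy_schwarz hip z g) _.
by rewrite mulrAC ler_wpM2r //; apply: kappa_bound.
Qed.

Lemma near_minimizers (R : realType) (H : completeNormedModType R) (A : H -> nat -> R)
    (Hn : nat -> set H) (z : H) :
  (forall n, Hn n 0) ->
  inf [set supnorm (A (z - w)) | w in Hn n] @[n --> \oo] --> 0 ->
  exists2 zs : nat -> H, forall n, Hn n (zs n) &
    supnorm (A (z - zs n)) @[n --> \oo] --> 0.
Proof.
move=> Hn0 inf0; pose I n := inf [set supnorm (A (z - w)) | w in Hn n].
have near_inf n : exists w, Hn n w /\ supnorm (A (z - w)) <= I n + harmonic n.
  have hasI : has_inf [set supnorm (A (z - w)) | w in Hn n].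
    by split; [exists (supnorm (A (z - 0))), 0 | exists 0 => _ [w _ <-]; apply: supnorm_ge0].
  have [_ [w Hw <-] lt_w] := inf_adherent (harmonic_gt0 n) hasI.
  by exists w; split=> //; apply: ltW.
have [zs hzs] := choice near_inf.
exists zs => [n|]; first by case: (hzs n).
apply: (@squeeze_cvgr _ _ _ _ (fun=> 0) (fun n => I n + harmonic n)); last 2 first.
- exact: cvg_cst.
- by rewrite -(addr0 0); apply: cvgD => //; exact: cvg_harmonic.
by near=> n; rewrite supnorm_ge0 /=; case: (hzs n).
Unshelve. all: by end_near. Qed.

(* Otherwise hypotheses such as [forall k, is_l1 (ck k)] get [k] implicit,
   since [is_l1] unfolds to a product. *)
Unset Implicit Arguments.

Section PerturbedProblems.
Variables (R : realType) (H : completeNormedModType R).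
Variables (ip : H -> H -> R) (A : H -> nat -> R) (Astar : (nat -> R) -> H).
Variables (Hn : nat -> set H) (f : H).
Hypothesis hip : hilbert_inner_product ip.
Hypothesis hA : bounded_linear_to_c0 A.
Hypothesis hadj : is_adjoint ip A Astar.
Hypothesis hdim : forall n, subspace_of_dim (Hn n) n.
Hypothesis approx : forall z, inf [set supnorm (A (z - w)) | w in Hn n] @[n --> \oo] --> 0.
Variables (u0 : nat -> R) (nk : nat -> nat) (fd : nat -> H) (um ck : nat -> nat -> R).
Variable kd : nat -> R.
Hypothesis u0_l1 : is_l1 u0.
Hypothesis Au0 : Astar u0 = f.
Hypothesis nk_oo : nk @ \oo --> \oo.
Hypothesis um_min : forall k, is_min_l1_solution ip Astar (Hn (nk k)) (fd k) (um k).
Hypothesis ck_l1 : forall k, is_l1 (ck k).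
Hypothesis ck_le : forall k, l1norm (ck k) <= kd k.
Hypothesis ck_repr : forall k z, Hn (nk k) z -> pairing (ck k) (A z) = ip z (fd k - f).
Hypothesis kd0 : kd @ \oo --> 0.

Lemma um_l1 k : is_l1 (um k).
Proof. by case: (um_min k). Qed.

Lemma um_constraint k z : Hn (nk k) z -> pairing (um k) (A z) = ip z (fd k).
Proof. by case: (um_min k) => hu um_eq _ Vz; rewrite -hadj // (ipC hip) um_eq. Qed.

Lemma pairing_A_solution w z : is_l1 w -> Astar w = f -> pairing w (A z) = ip f z.
Proof. by move=> hw Aw; rewrite -hadj // Aw. Qed.

Lemma um_le k w : is_l1 w -> Astar w = f -> l1norm (um k) <= l1norm w + kd k.
Proof.
move=> hw Aw; have hv := is_l1D hw (ck_l1 k).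
case: (um_min k) => _ _ um_opt.
apply: le_trans (um_opt _ hv _) (le_trans (l1normD_le hw (ck_l1 k)) _).
  move=> z Vz; rewrite (ipC hip) hadj // (pairingDl hw (ck_l1 k) (A_supnorm_ge hA z)).
  rewrite pairing_A_solution // ck_repr // [ip z _](ipC hip) (ipBl hip).
  by rewrite [RHS](ipC hip) addrC subrK.
by rewrite lerD2l.
Qed.

Lemma kd_bounded : exists B, forall k, kd k <= B.
Proof.
have [B HB] := cvg_has_ub (cvgP _ kd0); exists B => k.
by apply: le_trans (ler_norm _) _; apply: HB; exists k.
Qed.

Lemma um_cvg_weak z : pairing (um k) (A z) @[k --> \oo] --> ip f z.
Proof.
have [zs zsV zs0] := near_minimizers (fun n => subspace0 (hdim n)) (approx z).
pose zk k := zs (nk k).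
pose a k := supnorm (A (z - zk k)).
have a0 : a @ \oo --> 0 by apply: cvg_comp nk_oo zs0.
have [B kdB] := kd_bounded.
(* [d k] annihilates [A (Hn (nk k))], so only [z - zk k] and [ck k] contribute *)
pose d k i := um k i - u0 i - ck k i.
have d_l1 k : is_l1 (d k) by apply/is_l1B/ck_l1/is_l1B/u0_l1/um_l1.
have pairing_d k x : (forall i, `|x i| <= supnorm x) ->
    pairing (d k) x = pairing (um k) x - pairing u0 x - pairing (ck k) x.
  move=> bx; rewrite (pairingBl _ (ck_l1 k) bx); last exact/is_l1B/u0_l1/um_l1.
  by rewrite (pairingBl (um_l1 k) u0_l1 bx).
have d_annihilates k : pairing (d k) (A (zk k)) = 0.
  rewrite pairing_d; last exact: A_supnorm_ge.
  rewrite um_constraint ?ck_repr ?zsV // pairing_A_solution //.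
  by rewrite [ip (zk k) (_ - _)](ipC hip) (ipBl hip) !(ipC hip _ (zk k)); ring.
pose K := (l1norm u0 + B) + l1norm u0 + B.
have dist_le k : `|pairing (um k) (A z) - ip f z| <= 1 * (K * a k + supnorm (A z) * kd k).
  have -> : pairing (um k) (A z) - ip f z =
      pairing (d k) (A (z - zk k)) + pairing (ck k) (A z).
    rewrite (pairing_AB hA _ _ (d_l1 k)) d_annihilates subr0 pairing_d; last exact: A_supnorm_ge.
    by rewrite -(pairing_A_solution u0 z u0_l1 Au0); ring.
  rewrite mul1r (le_trans (ler_normD _ _)) // lerD //.
    apply: le_trans (pairing_le (d_l1 k) (A_supnorm_ge hA _)) _.
    apply: ler_wpM2r; first exact: supnorm_ge0.
    apply: le_trans (l1normB_le _ (ck_l1 k)) _; first exact/is_l1B/u0_l1/um_l1.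
    apply: lerD; last exact: le_trans (ck_le k) (kdB k).
    apply: le_trans (l1normB_le (um_l1 k) u0_l1) _.
    by rewrite lerD2r (le_trans (um_le k u0 u0_l1 Au0)) // lerD2l.
  apply: le_trans (pairing_le (ck_l1 k) (A_supnorm_ge hA _)) _.
  by rewrite mulrC ler_wpM2l ?supnorm_ge0.
apply: (cvg_of_dist_le dist_le); rewrite -(addr0 0).
by apply: cvgD; [rewrite -(mulr0 K) | rewrite -(mulr0 (supnorm (A z)))]; apply: cvgMl_tmp.
Qed.
Lemma um_subseq_cvg_to_solution :
  exists (phi : nat -> nat) (udag : nat -> R),
    {homo phi : k l / (k < l)%N >-> (k < l)%N} /\
    is_l1 udag /\ Astar udag = f /\
    l1norm (fun i => um (phi k) i - udag i) @[k --> \oo] --> 0.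
Proof.
have [B kdB] := kd_bounded.
apply: (l1_subseq_cvg_to_solution hip hA hadj (M := l1norm u0 + B)).
- exact: um_l1.
- by move=> k; rewrite (le_trans (um_le k u0 u0_l1 Au0)) // lerD2l.
- exact: um_cvg_weak.
- move=> w hw Aw e e0; have kd_e := (cvgrPdist_le _ _).1 kd0 e e0.
  near=> k; rewrite (le_trans (um_le k w hw Aw)) // lerD2l.
  have : `|0 - kd k| <= e by near: k; exact: kd_e.
  by rewrite sub0r normrN; apply: le_trans (ler_norm _).
Unshelve. all: by end_near. Qed.

End PerturbedProblems.

Theorem theorem1 (R : realType) (H : completeNormedModType R)
  (ip : H -> H -> R) (A : H -> nat -> R) (Astar : (nat -> R) -> H)
  (Hn : nat -> set H) (P : nat -> H -> H) (f : H) :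
  hilbert_inner_product ip ->
  bounded_linear_to_c0 A ->
  is_adjoint ip A Astar ->
  (forall n, subspace_of_dim (Hn n) n) ->
  (forall n, is_orth_proj ip (Hn n) (P n)) ->
  (forall v, P n v @[n --> \oo] --> v) ->
  (forall n z, Hn n z -> A z = (fun _ => 0) -> z = 0) ->
  (exists u, is_l1 u /\ Astar u = f) ->
  (forall z, inf [set supnorm (A (z - w)) | w in Hn n] @[n --> \oo] --> 0) ->
  (* (a) *)
  (forall ud : nat -> nat -> R,
     (forall n, is_min_l1_solution ip Astar (Hn n) f (ud n)) ->
     exists (phi : nat -> nat) (udag : nat -> R),
       {homo phi : k l / (k < l)%N >-> (k < l)%N} /\
       is_l1 udag /\ Astar udag = f /\
       l1norm (fun i => ud (phi k) i - udag i) @[k --> \oo] --> 0)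
  /\
  (* (b) *)
  (forall (nAP : R -> nat) (delta : nat -> R) (fd : nat -> H) (um : nat -> nat -> R),
     (forall N : nat, \forall d \near 0^'+, (N <= nAP d)%N) ->
     d * kappa A Hn (nAP d) @[d --> 0^'+] --> 0 ->
     (forall m, 0 < delta m) ->
     delta m @[m --> \oo] --> 0 ->
     (forall m, `|fd m - f| <= delta m) ->
     (forall m, is_min_l1_solution ip Astar (Hn (nAP (delta m))) (fd m) (um m)) ->
     exists (phi : nat -> nat) (udag : nat -> R),
       {homo phi : k l / (k < l)%N >-> (k < l)%N} /\
       is_l1 udag /\ Astar udag = f /\
       l1norm (fun i => um (phi k) i - udag i) @[k --> \oo] --> 0).
Proof.
move=> hip hA hadj hdim _ _ Ainj [u0 [u0_l1 Au0]] approx; split.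
- move=> ud ud_min.
  apply: (um_subseq_cvg_to_solution _ _ ip A Astar Hn f hip hA hadj hdim approx u0 id
    (fun=> f) ud (fun _ _ => 0) (fun=> 0)) => //.
  + by move=> _; exact: is_l1_0.
  + by move=> _; rewrite l1norm0.
  + by move=> k z _; rewrite pairing0 subrr (ipC hip) ip0l.
  + exact: cvg_cst.
- move=> nAP delta fd um nAP_oo kappa0 delta_pos delta0 fd_near um_min.
  have delta_right : delta @ \oo --> 0^'+.
    by move=> Q /delta0[N _ HN]; exists N => // k Nk; apply: HN Nk (delta_pos k).
  have nk_oo : (fun k => nAP (delta k)) @ \oo --> \oo.
    apply: cvg_comp delta_right _ => Q [N _ HN].
    by apply: filterS (nAP_oo N) => d; apply: HN.
  have [ck hck] := choice (fun k =>
    data_error_representer (fd k - f) hip hA (hdim (nAP (delta k))) (Ainj _)).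
  apply: (um_subseq_cvg_to_solution _ _ ip A Astar Hn f hip hA hadj hdim approx u0
    (fun k => nAP (delta k)) fd um ck (fun k => delta k * kappa A Hn (nAP (delta k)))) => //.
  + by move=> k; case: (hck k).
  + move=> k; case: (hck k) => _ ck_le _; apply: le_trans ck_le _.
    by rewrite mulrC; apply: ler_wpM2r; [exact: kappa_ge0 | exact: fd_near].
  + by move=> k; case: (hck k).
  + exact: cvg_comp delta_right kappa0.
Qed.
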